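(* Let $G$ be a nontrivial connected graph of order $n$ and maximum degree $\Delta(G)$. Then $$\max\{\Delta(G),\operatorname{diam}(G)\}\leq prc(G)\leq \chi'(G)+(n-1-\Delta(G)),$$ where the right-hand side equals $n$ if $G$ is class 2 and equals $n-1$ if $G$ is class 1.
   Context: All graphs are simple, finite and undirected. A path in an edge-coloured graph is a rainbow path if its edges receive pairwise distinct colours. An edge-colouring is proper if adjacent edges receive distinct colours. A connected graph $G$ with a proper edge-colouring is properly rainbow connected if every two distinct vertices are joined by a rainbow path. The proper rainbow connection number $prc(G)$ of a nontrivial connected graph $G$ is the minimum number of colours in a proper edge-colouring making $G$ properly rainbow connected. $\chi'(G)$ is the chromatic index; by Vizing's theorem $\chi'(G)\in\{\Delta(G),\Delta(G)+1\}$, and $G$ is class 1 if $\chi'(G)=\Delta(G)$ and class 2 otherwise. $\operatorname{diam}(G)$ is the diameter. *)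

(* Simple graphs as symmetric irreflexive relations on a finType. *)
From mathcomp Require Import all_boot.
Set Implicit Arguments. Unset Strict Implicit. Unset Printing Implicit Defensive.

Section Graphs.
Variables (T : finType) (e : rel T).

Definition is_min (P : nat -> Prop) (m : nat) : Prop := P m /\ forall k, P k -> m <= k.
Definition is_max (P : nat -> Prop) (m : nat) : Prop := P m /\ forall k, P k -> k <= m.

Definition maxdeg : nat := \max_(v : T) #|[set u | e v u]|.

Definition walk_len (x y : T) (d : nat) : Prop :=
  exists p : seq T, [/\ path e x p, last x p = y & size p = d].
Definition is_dist (x y : T) (d : nat) : Prop := is_min (walk_len x y) d.
Definition is_diam (D : nat) : Prop :=
  is_max (fun d => exists x y, is_dist x y d) D.

(* an edge colouring c (the colour of edge xy is c x y = c y x) that is proper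
   and uses only colours in {0, ..., k-1} *)
Definition proper_edge_colouring (k : nat) (c : T -> T -> nat) : Prop :=
  [/\ forall x y, e x y -> c x y = c y x,
      forall x y, e x y -> c x y < k
    & forall x y z, e x y -> e x z -> y != z -> c x y != c x z].

Definition is_chromatic_index (k : nat) : Prop :=
  is_min (fun k => exists c, proper_edge_colouring k c) k.

Definition rainbow_path (c : T -> T -> nat) (x y : T) (p : seq T) : Prop :=
  [/\ path e x p, last x p = y, uniq (x :: p) & uniq (pairmap c x p)].

Definition properly_rainbow_connected (k : nat) (c : T -> T -> nat) : Prop :=
  proper_edge_colouring k c /\
  forall x y, x != y -> exists p, rainbow_path c x y p.

Definition is_prc (k : nat) : Prop :=
  is_min (fun k => exists c, properly_rainbow_connected k c) k.

End Graphs.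

From mathcomp Require Import all_boot zify.
From Stdlib Require Import Classical.
Set Implicit Arguments. Unset Strict Implicit. Unset Printing Implicit Defensive.

(* In a proper colouring a vertex of maximum degree sees Delta distinct colours,
   and a rainbow path between two vertices at distance diam(G) has diam(G)
   distinctly coloured edges: this gives the lower bound.  For the upper bound
   take an optimal proper colouring and a breadth-first spanning tree rooted at
   a vertex v of maximum degree.  The n - 1 - Delta vertices not adjacent to v
   give the edge to their parent a colour of its own; the tree edges at v keep
   their colours, which are distinct as the colouring is proper at v.  All tree
   edges now have distinct colours, so tree paths are rainbow.  The value n - 1
   or n of the bound comes from Vizing's theorem chi' <= Delta + 1, proved
   after Ehrenfeucht, Faber and Kierstead: a vertex is added back by reserving
   missing colours at its neighbours and swapping Kempe chains until some
   colour is reserved exactly once, and then recursing on one colour fewer. *)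

Lemma is_min_exists (P : nat -> Prop) : (exists n, P n) -> exists m, is_min P m.
Proof.
case=> n Pn; elim: n {-2}n (leqnn n) Pn => [|N IHN] n le_nN Pn.
  by exists n; split=> // k _; move: le_nN; rewrite leqn0 => /eqP->.
have [[k [Pk lt_kn]]|no_less] := classic (exists k, P k /\ k < n).
  by apply: (IHN k) => //; lia.
exists n; split=> // k Pk; rewrite leqNgt; apply/negP => lt_kn.
by apply: no_less; exists k.
Qed.

Lemma exists_subset_card (T : finType) (A : {set T}) n : n <= #|A| ->
  exists2 B : {set T}, B \subset A & #|B| = n.
Proof.
elim: n => [|n IHn] ltn; first by exists set0; rewrite ?sub0set ?cards0.
have [B sBA cardB] := IHn (ltnW ltn).
have /card_gt0P[x] : 0 < #|A :\: B| by rewrite cardsD (setIidPr sBA) cardB subn_gt0.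
rewrite inE => /andP[xB xA]; exists (x |: B); first by rewrite subUset sub1set xA.
by rewrite cardsU1 xB cardB.
Qed.

Lemma odd_sum_odd (I : finType) (F : I -> nat) :
  odd (\sum_i F i) -> exists i, odd (F i).
Proof.
case: (boolP [exists i, odd (F i)]) => [/existsP//|/existsPn even].
suff -> : odd (\sum_i F i) = false by [].
by elim/big_ind: _ => [//|m n|i _]; [rewrite oddD => -> ->|exact: negPf].
Qed.

Section Colourings.
Variable T : finType.
Implicit Types (r g : rel T) (c : T -> T -> nat) (k : nat) (u v x y : T).

Definition deg r x := #|[set y | r x y]|.

Definition colourable r k := exists c, proper_edge_colouring r k c.

Definition del_vertex v r : rel T := fun x y => [&& r x y, x != v & y != v].

Definition missing g c u l := [forall y, g u y ==> (c u y != l)].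

Lemma del_vertex_sym v r : symmetric r -> symmetric (del_vertex v r).
Proof. by move=> rs x y; rewrite /del_vertex rs [(x != v) && _]andbC. Qed.

Lemma del_vertex_irr v r : irreflexive r -> irreflexive (del_vertex v r).
Proof. by move=> ri x; rewrite /del_vertex ri. Qed.

Lemma del_vertex_sub v r : subrel (del_vertex v r) r.
Proof. by move=> x y /andP[]. Qed.

Lemma deg_del_vertex r v u : symmetric r -> irreflexive r -> r v u ->
  deg r u = (deg (del_vertex v r) u).+1.
Proof.
move=> rs ri rvu; rewrite /deg (cardsD1 v) inE -rs rvu add1n; congr _.+1.
have nuv : u != v by apply: contraTneq rvu => ->; rewrite ri.
by apply: eq_card => y; rewrite !inE /del_vertex nuv andbC.
Qed.

Lemma isolated_del_vertex v r : symmetric r -> (forall u, ~~ r v u) ->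
  subrel r (del_vertex v r).
Proof.
move=> rs isol x y rxy; rewrite /del_vertex rxy /=.
by apply/andP; split; apply: contraTneq rxy => ->; [|rewrite rs]; exact: isol.
Qed.

Lemma subrel_deg r r' x : subrel r' r -> deg r' x <= deg r x.
Proof. by move=> sub; apply/subset_leq_card/subsetP => y; rewrite !inE => /sub. Qed.

Lemma subrel_deg_lt r r' x y : subrel r' r -> r x y -> ~~ r' x y ->
  deg r' x < deg r x.
Proof.
move=> sub rxy nr'xy; apply/proper_card/properP; split.
  by apply/subsetP => z; rewrite !inE => /sub.
by exists y; rewrite !inE.
Qed.

Lemma proper_colouring_subrel r r' k c : subrel r r' ->
  proper_edge_colouring r' k c -> proper_edge_colouring r k c.
Proof.
move=> sub [cs cb cp]; split=> [x y /sub|x y /sub|x y z /sub rxy /sub]; auto.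
Qed.

Lemma colourable_subrel r r' k : subrel r r' -> colourable r' k -> colourable r k.
Proof. by move=> sub [c cp]; exists c; apply: proper_colouring_subrel cp. Qed.

Lemma colours_at_uniq g k c u : proper_edge_colouring g k c ->
  uniq [seq c u y | y in [set y | g u y]].
Proof.
case=> _ _ cp; rewrite map_inj_in_uniq ?enum_uniq // => y z.
rewrite !mem_enum !inE => guy guz /eqP; apply: contraTeq => nyz; exact: cp.
Qed.

Lemma deg_le_colours g k c u : proper_edge_colouring g k c -> deg g u <= k.
Proof.
move=> cp; rewrite /deg -(size_iota 0 k) cardE -(size_map (c u)).
apply: uniq_leq_size (colours_at_uniq u cp) _ => l /mapP[y].
by rewrite mem_enum inE mem_iota => guy ->; case: cp => _ /(_ _ _ guy).
Qed.

Lemma deg_add_card_missing g k c u : proper_edge_colouring g k.+1 c ->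
  deg g u + #|[set l : 'I_k.+1 | missing g c u l]| = k.+1.
Proof.
move=> cp; have [_ cb _] := cp.
rewrite -[k.+1 in RHS]card_ord -(cardsC [set l : 'I_k.+1 | missing g c u l]) addnC.
congr (_ + _); rewrite /deg -(card_in_imset (f := fun y => inord (c u y) : 'I_k.+1)).
  apply: eq_card => l; rewrite !inE negb_forall; apply/imsetP/existsP => [[y]|[y]].
    rewrite inE => guy ->; exists y; rewrite guy /= inordK ?eqxx //; exact: cb.
  rewrite negb_imply negbK => /andP[guy /eqP cuy]; exists y; rewrite ?inE //.
  by apply: val_inj; rewrite /= inordK // cuy.
move=> y z; rewrite !inE => guy guz /(congr1 val) /=; rewrite !inordK ?cb // => cyz.
case: cp => _ _ cp; apply/eqP; apply: contraTT (eqxx (c u y)) => nyz.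
by rewrite {2}cyz; exact: cp.
Qed.

Lemma drop_colour_proper g k c (l : nat) : l < k.+1 ->
  proper_edge_colouring g k.+1 c ->
  proper_edge_colouring [rel x y | g x y && (c x y != l)] k
    (fun x y => if c x y < l then c x y else (c x y).-1).
Proof.
move=> lk [cs cb cp].
split=> [x y /andP[gxy _]|x y /andP[gxy nl]|x y z /andP[gxy nly] /andP[gxz nlz] nyz].
- by rewrite cs.
- by have := cb x y gxy; move: nl; case: (ltnP (c x y) l); lia.
have := cp x y z gxy gxz nyz; move: nly nlz.
by case: (ltnP (c x y) l); case: (ltnP (c x z) l); lia.
Qed.

Lemma add_matching_proper r r' k d : symmetric r' ->
  (forall x y z, r x y -> r x z -> ~~ r' x y -> ~~ r' x z -> y = z) ->
  proper_edge_colouring r' k d ->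
  proper_edge_colouring r k.+1 (fun x y => if r' x y then d x y else k).
Proof.
move=> r's matching [ds db dp]; split=> [x y _|x y _|x y z rxy rxz nyz].
- by rewrite r's; case: ifP => // /ds.
- by case: ifP => // /db /ltnW.
case: (boolP (r' x y)) => r'xy; case: (boolP (r' x z)) => r'xz.
- exact: dp.
- by rewrite neq_ltn db.
- by rewrite neq_ltn db ?orbT.
- by rewrite (matching x y z) ?eqxx in nyz.
Qed.

End Colourings.

Section KempeChain.
Variables (T : finType) (g : rel T) (K : nat) (c : T -> T -> nat).
Hypothesis g_sym : symmetric g.
Hypothesis c_proper : proper_edge_colouring g K c.

Definition nbr_col (l : nat) x := if [pick y | g x y && (c x y == l)] is Some y then y else x.

Lemma nbr_colE l x y : g x y -> c x y = l -> nbr_col l x = y.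
Proof.
move=> gxy cxy; rewrite /nbr_col; case: pickP => [z /andP[gxz /eqP cxz]|none].
  case: c_proper => _ _ cp; apply/eqP; apply: contraTT isT => nzy.
  by have := cp x z y gxz gxy nzy; rewrite cxz cxy eqxx.
by have := none y; rewrite gxy cxy eqxx.
Qed.

Lemma nbr_col_missing l x : missing g c x l -> nbr_col l x = x.
Proof.
move=> /forallP miss; rewrite /nbr_col; case: pickP => [y /andP[gxy cxy]|//].
by have := miss y; rewrite gxy cxy.
Qed.

Lemma nbr_colK l : involutive (nbr_col l).
Proof.
move=> x; rewrite {2}/nbr_col; case: pickP => [y /andP[gxy /eqP cxy]|none].
  apply: nbr_colE; first by rewrite g_sym.
  by case: c_proper => cs _ _; rewrite -cxy cs // g_sym.
apply/nbr_col_missing/forallP => y; apply/implyP => gxy.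
by have := none y; rewrite gxy => /negbT.
Qed.

Variables i j : nat.

(* Alternating [j] then [i] edges walks along the [i]/[j]-coloured path; as
   this map is a permutation, the chain of [w] is the orbit of [w]. *)
Definition kempe_step x := nbr_col i (nbr_col j x).

Lemma kempe_step_inj : injective kempe_step.
Proof. exact: inj_comp (can_inj (nbr_colK i)) (can_inj (nbr_colK j)). Qed.

Variable w : T.
Hypothesis w_missing : missing g c w i.

Definition kempe_chain := [set x | fconnect kempe_step w x].

Lemma kempe_chain_root : w \in kempe_chain.
Proof. by rewrite inE connect0. Qed.

Lemma iter_kempe_step_nbr_col n : iter n kempe_step (nbr_col i (iter n kempe_step w)) = w.
Proof.
elim: n => [|n IHn]; first exact: nbr_col_missing.
by rewrite iterSr iterS /kempe_step !nbr_colK.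
Qed.

Lemma kempe_chain_nbr_col_i x : x \in kempe_chain -> nbr_col i x \in kempe_chain.
Proof.
rewrite !inE => /iter_findex; set n := findex _ _ _ => xE.
rewrite fconnect_sym; last exact: kempe_step_inj.
by have := fconnect_iter kempe_step n (nbr_col i x); rewrite -xE iter_kempe_step_nbr_col.
Qed.

Lemma kempe_chain_nbr_col_j x : x \in kempe_chain -> nbr_col j x \in kempe_chain.
Proof.
move=> xK; rewrite -[nbr_col j x](nbr_colK i); apply: kempe_chain_nbr_col_i.
by move: xK; rewrite !inE => /connect_trans; apply; exact: fconnect1.
Qed.

Lemma kempe_chain_edge x y : g x y -> (c x y == i) || (c x y == j) ->
  (x \in kempe_chain) = (y \in kempe_chain).
Proof.
have [cs _ _] := c_proper; move=> gxy cxy.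
have gyx : g y x by rewrite g_sym.
have cyx : c y x = c x y by rewrite cs.
case/orP: cxy => /eqP cxy; apply/idP/idP.
- by rewrite -(nbr_colE gxy cxy); exact: kempe_chain_nbr_col_i.
- by rewrite -(nbr_colE gyx (etrans cyx cxy)); exact: kempe_chain_nbr_col_i.
- by rewrite -(nbr_colE gxy cxy); exact: kempe_chain_nbr_col_j.
- by rewrite -(nbr_colE gyx (etrans cyx cxy)); exact: kempe_chain_nbr_col_j.
Qed.

Lemma iter_kempe_step_root n : n < order kempe_step w ->
  iter n kempe_step w = w -> n = 0.
Proof.
move=> ltn wE; have := findex_iter ltn; rewrite wE.
by have := findex_iter (order_gt0 kempe_step w); rewrite /= => ->.
Qed.

(* The reflection [nbr_col i] reverses the orbit, so an [i]-missing vertex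
   other than [w] sits exactly half-way round it. *)
Lemma findex_missing_double x : x \in kempe_chain -> nbr_col i x = x -> x != w ->
  (findex kempe_step w x).*2 = order kempe_step w.
Proof.
rewrite inE => xK xfix nxw.
set n := findex kempe_step w x; set L := order kempe_step w.
have nL : n < L := findex_max xK.
have xE : iter n kempe_step w = x := iter_findex xK.
have wE : iter (n + n) kempe_step w = w.
  by rewrite iterD xE -{1}xfix -xE iter_kempe_step_nbr_col.
have n0 : n != 0 by apply: contra nxw => /eqP n0; rewrite -xE n0.
have [ltL|geL] := ltnP (n + n) L; first by have := iter_kempe_step_root ltL wE; lia.
have : iter (n + n - L) kempe_step w = w.
  rewrite -{2}wE -{2}(subnK geL) iterD iter_order //; exact: kempe_step_inj.
move/iter_kempe_step_root; lia.
Qed.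

Lemma kempe_chain_missing_uniq x y :
  x \in kempe_chain -> nbr_col i x = x -> x != w ->
  y \in kempe_chain -> nbr_col i y = y -> y != w -> x = y.
Proof.
move=> xK xfix nxw yK yfix nyw.
have := findex_missing_double xK xfix nxw; rewrite -(findex_missing_double yK yfix nyw).
move: xK yK; rewrite !inE => /iter_findex {2}<- /iter_findex {2}<-.
by move/double_inj ->.
Qed.

Definition swap_col (l : nat) := if l == i then j else if l == j then i else l.

Lemma swap_colK : involutive swap_col.
Proof.
move=> l; rewrite /swap_col.
case: (eqVneq l i) => [->|nli]; first by rewrite eqxx; case: eqVneq.
case: (eqVneq l j) => [->|nlj]; first by rewrite eqxx.
by rewrite (negPf nli) (negPf nlj).
Qed.

Lemma swap_col_i : swap_col i = j.
Proof. by rewrite /swap_col eqxx. Qed.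

Lemma swap_col_id l : l != i -> l != j -> swap_col l = l.
Proof. by rewrite /swap_col => /negPf -> /negPf ->. Qed.

Definition kempe_swap x y := if x \in kempe_chain then swap_col (c x y) else c x y.

Lemma missing_kempe_swap u l : missing g c u l ->
  missing g kempe_swap u (if u \in kempe_chain then swap_col l else l).
Proof.
move=> /forallP miss; apply/forallP => y; apply/implyP => guy.
have := miss y; rewrite guy /kempe_swap; case: ifP => // _.
by rewrite (inj_eq (can_inj swap_colK)).
Qed.

Lemma kempe_swap_proper : i < K -> j < K -> proper_edge_colouring g K kempe_swap.
Proof.
move=> iK jK; have [cs cb cp] := c_proper; split.
- move=> x y gxy; rewrite /kempe_swap -(cs _ _ gxy).
  case: (boolP ((c x y == i) || (c x y == j))) => [cxy|].
    by rewrite (kempe_chain_edge gxy cxy).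
  by rewrite negb_or /swap_col => /andP[/negPf -> /negPf ->]; rewrite !if_same.
- move=> x y gxy; rewrite /kempe_swap /swap_col.
  case: ifP => _; last exact: cb.
  by case: ifP => _ //; case: ifP => _ //; exact: cb.
- move=> x y z gxy gxz nyz; rewrite /kempe_swap; case: ifP => _; last exact: cp.
  by rewrite (inj_eq (can_inj swap_colK)); exact: cp.
Qed.

End KempeChain.

(* The extension lemma of Ehrenfeucht, Faber and Kierstead; Vizing's theorem
   follows by deleting the vertices one at a time. *)
Definition colouring_extends (T : finType) k := forall (r : rel T) v s,
  symmetric r -> irreflexive r ->
  deg r v <= k -> (forall u, r v u -> u != s -> deg r u < k) -> (r v s -> deg r s <= k) ->
  colourable (del_vertex v r) k -> colourable r k.

Section Fan.
Variables (T : finType) (k : nat) (r : rel T) (v s : T).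
Hypotheses (r_sym : symmetric r) (r_irr : irreflexive r).
Hypothesis deg_v : deg r v <= k.+1.
Hypothesis deg_nbr : forall u, r v u -> u != s -> deg r u < k.+1.
Hypothesis deg_s : deg r s <= k.+1.
Hypothesis r_vs : r v s.

Local Notation g := (del_vertex v r).
Let g_sym : symmetric g := del_vertex_sym v r_sym.
Implicit Types (c : T -> T -> nat) (S : T -> {set 'I_k.+1}).

Definition fan_config c S := [/\ proper_edge_colouring g k.+1 c,
  forall u, r v u -> forall l : 'I_k.+1, l \in S u -> missing g c u l
  & forall u, r v u -> #|S u| = (if u == s then 1 else 2)].

Definition holders S (l : 'I_k.+1) := [set u | r v u && (l \in S u)].

Definition present S := [set l | holders S l != set0].

Lemma deg_nbr_bound u : r v u -> deg r u + (if u == s then 1 else 2) <= k.+2.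
Proof. by move=> rvu; case: eqVneq => [->|/(deg_nbr rvu)]; lia. Qed.

Lemma sum_card_holders c S : fan_config c S ->
  \sum_l #|holders S l| = (#|[set u | r v u && (u != s)]|).*2.+1.
Proof.
case=> _ _ cardS.
have holdersE l : #|holders S l| = \sum_(u | r v u) (l \in S u).
  rewrite -sum1_card (eq_bigl (fun u => r v u && (l \in S u))) => [|u]; last by rewrite inE.
  by rewrite big_mkcondr; apply: eq_bigr => u _; case: (l \in S u).
have cardE u : \sum_l (l \in S u) = #|S u|.
  by rewrite -sum1_card [RHS]big_mkcond; apply: eq_bigr => l _; case: (l \in S u).
rewrite (eq_bigr _ (fun l _ => holdersE l)) exchange_big /=.
rewrite (eq_bigr _ (fun u _ => cardE u)) (bigD1 s) //= cardS // eqxx.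
rewrite (eq_bigr (fun _ => 2)) => [|u /andP[rvu /negPf nus]]; last by rewrite cardS // nus.
rewrite sum_nat_const add1n -muln2; congr (_ * _).+1.
by apply: eq_card => u; rewrite inE.
Qed.

Lemma card_nbrs_but_s : #|[set u | r v u && (u != s)]| <= k.
Proof.
have : #|[set u | r v u && (u != s)]| < deg r v.
  apply/proper_card/properP; split; first by apply/subsetP => u; rewrite !inE => /andP[].
  by exists s; rewrite !inE ?r_vs ?eqxx.
by move: deg_v; lia.
Qed.

Lemma fan_absent_colour c S : fan_config c S -> (forall l, #|holders S l| != 1) ->
  exists j, holders S j = set0.
Proof.
move=> cS not1; case: (boolP [exists j, holders S j == set0]) => [/existsP[j /eqP]|].
  by exists j.
move=> /existsPn nonempty; have := sum_card_holders cS; have := card_nbrs_but_s.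
have : \sum_(l < k.+1) 2 <= \sum_l #|holders S l|.
  apply: leq_sum => l _; have := not1 l; have := nonempty l.
  by rewrite -cards_eq0; lia.
by rewrite sum_nat_const card_ord; lia.
Qed.

Lemma fan_odd_colour c S : fan_config c S -> exists i, odd #|holders S i|.
Proof. by move=> cS; apply: odd_sum_odd; rewrite (sum_card_holders cS) /= odd_double. Qed.

Section KempeSwapFan.
Variables (c : T -> T -> nat) (S : T -> {set 'I_k.+1}) (i j : 'I_k.+1) (w : T).
Hypothesis cS : fan_config c S.
Hypothesis j_absent : holders S j = set0.
Hypothesis w_holds_i : w \in holders S i.

Let j_notin u : r v u -> j \notin S u.
Proof.
move=> rvu; apply/negP => jSu.
have : u \in holders S j by rewrite inE rvu jSu.
by rewrite j_absent inE.
Qed.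

Let w_missing : missing g c w i.
Proof. by move: w_holds_i; rewrite inE => /andP[rvw iSw]; case: cS => _ /(_ w rvw i iSw). Qed.

Local Notation chain := (kempe_chain g c i j w).

Definition swap_reserved u := if (u \in chain) && (i \in S u) then j |: (S u :\ i) else S u.

Lemma fan_config_swap : fan_config (kempe_swap g c i j w) swap_reserved.
Proof.
have [c_proper c_miss cardS] := cS; split.
- exact: (kempe_swap_proper g_sym c_proper w_missing (ltn_ord i) (ltn_ord j)).
- move=> u rvu l.
  have miss l' : l' \in S u -> missing g (kempe_swap g c i j w) u
      (if u \in chain then swap_col i j l' else l').
    by move=> l'S; apply: missing_kempe_swap; exact: c_miss.
  have swap_id l' : l' \in S u -> (l' : nat) != i -> swap_col i j l' = l'.
    by move=> l'S nl'i; apply: swap_col_id nl'i _; apply: contraNneq (j_notin rvu) => /val_inj <-.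
  rewrite /swap_reserved; case: (boolP (u \in chain)) => /= [uK|uK lS]; last first.
    by have := miss l lS; rewrite (negPf uK).
  have {}miss l' : l' \in S u -> missing g (kempe_swap g c i j w) u (swap_col i j l').
    by move=> /miss; rewrite uK.
  case: ifP => [iSu|iSu lS].
    rewrite !inE => /orP[/eqP ->|/andP[nli lS]]; first by have := miss i iSu; rewrite swap_col_i.
    by have := miss l lS; rewrite swap_id.
  by have := miss l lS; rewrite swap_id //; apply: contraFneq iSu => /val_inj <-.
- move=> u rvu; rewrite /swap_reserved; case: ifP => [/andP[_ iSu]|_]; last exact: cardS.
  rewrite cardsU1 in_setD1 (negPf (j_notin rvu)) andbF add1n -(cardS u rvu).
  by rewrite [in RHS](cardsD1 i) iSu.
Qed.

Lemma holder_outside_chain : 3 <= #|holders S i| ->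
  exists2 u, u \in holders S i & u \notin chain.
Proof.
move=> card3; apply/exists_inP; apply: contraT; rewrite negb_exists_in => /forall_inP inK.
have {}inK u : u \in holders S i -> u \in chain by move=> /inK; rewrite negbK.
have fix_i u : u \in holders S i -> nbr_col g c i u = u.
  rewrite inE => /andP[rvu iSu]; apply: nbr_col_missing; by case: cS => _ /(_ u rvu i iSu).
have : 1 < #|holders S i :\ w| by move: card3; rewrite (cardsD1 w) w_holds_i; lia.
case/card_gt1P => a [b [/setD1P[naw aH] /setD1P[nbw bH]]]; apply: contra_neqT => _.
have [c_proper _ _] := cS.
by apply: (kempe_chain_missing_uniq (j := j) g_sym c_proper w_missing);
  rewrite ?inK ?fix_i.
Qed.

Lemma present_swap : 3 <= #|holders S i| -> #|present S| < #|present swap_reserved|.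
Proof.
move=> card3; apply/proper_card/properP; split.
  apply/subsetP => l; rewrite !inE => /set0Pn[u]; rewrite inE => /andP[rvu lSu].
  apply/set0Pn; case: (eqVneq l i) => [->|nli].
    have [u' u'_holds u'K] := holder_outside_chain card3; exists u'.
    by move: u'_holds; rewrite !inE /swap_reserved (negPf u'K).
  exists u; rewrite inE rvu /swap_reserved; case: ifP => // _.
  by rewrite !inE nli lSu orbT.
exists j; rewrite inE; last by rewrite j_absent eqxx.
move: w_holds_i; rewrite inE => /andP[rvw iSw]; apply/set0Pn; exists w.
by rewrite inE rvw /swap_reserved kempe_chain_root iSw !inE eqxx.
Qed.

End KempeSwapFan.

(* By counting, some colour [j] is reserved nowhere and some colour [i] an odd
   number, hence at least three, of times.  Swapping the [i]/[j]-Kempe chain of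
   an [i]-holder makes [j] reserved while [i] stays reserved, as the chain
   reaches at most one other [i]-holder. *)
Lemma fan_step c S : fan_config c S -> (forall l, #|holders S l| != 1) ->
  exists c' S', fan_config c' S' /\ #|present S| < #|present S'|.
Proof.
move=> cS not1; have [j j_absent] := fan_absent_colour cS not1.
have [i odd_i] := fan_odd_colour cS.
have card3 : 3 <= #|holders S i|.
  have := not1 i; move: odd_i; case: #|_| => [|[|[]]] //.
have [w w_holds_i] : exists w, w \in holders S i by apply/card_gt0P; lia.
exists (kempe_swap g c i j w), (swap_reserved c S i j w); split.
  exact: fan_config_swap.
exact: present_swap.
Qed.

Lemma fan_unique_holder c S : fan_config c S ->
  exists c' S' l, fan_config c' S' /\ #|holders S' l| = 1.
Proof.
have [n] := ubnP (k.+1 - #|present S|); elim: n => // n IHn in c S *.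
move=> lt_n cS; case: (boolP [exists l, #|holders S l| == 1]) => [/existsP[l /eqP]|].
  by exists c, S, l.
move=> /existsPn not1; have [c' [S' [cS' lt_present]]] := fan_step cS not1.
apply: (IHn c' S') => //; have := max_card (present S'); rewrite card_ord; lia.
Qed.

Lemma fan_config_exists c : proper_edge_colouring g k.+1 c -> exists S, fan_config c S.
Proof.
move=> c_proper.
pose M u := [set l : 'I_k.+1 | missing g c u l].
have reserve u : exists A : {set 'I_k.+1},
    r v u -> A \subset M u /\ #|A| = (if u == s then 1 else 2).
  case: (boolP (r v u)) => rvu; last by exists set0.
  have [|A sA cardA] := exists_subset_card (A := M u) (n := if u == s then 1 else 2).
    rewrite /M; have := deg_add_card_missing u c_proper.
    have := deg_del_vertex r_sym r_irr rvu; have := deg_nbr_bound rvu; lia.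
  by exists A.
have [S hS] := fin_all_exists reserve; exists S; split=> // u rvu.
  by move=> l /(subsetP (hS u rvu).1); rewrite inE.
exact: (hS u rvu).2.
Qed.

Section Reduce.
Variables (c : T -> T -> nat) (S : T -> {set 'I_k.+1}) (l : 'I_k.+1) (u : T).
Hypothesis cS : fan_config c S.
Hypothesis unique_holder : holders S l = [set u].

Let holder_eq w : r v w -> l \in S w -> w = u.
Proof. by move=> rvw lSw; apply/set1P; rewrite -unique_holder inE rvw. Qed.

Let u_holds : r v u && (l \in S u).
Proof. by have := set11 u; rewrite -unique_holder inE. Qed.

(* Deleting the [l]-coloured edges of [G - v] and the edge [vu] removes a
   matching and lowers the degrees enough for the [k]-colour extension lemma. *)
Definition fan_reduced : rel T := fun x y =>
  [&& r x y, ~~ (g x y && (c x y == l))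
    & ~~ ((x == v) && (y == u) || (x == u) && (y == v))].

Lemma fan_reduced_sub : subrel fan_reduced r.
Proof. by move=> x y /andP[]. Qed.

Lemma fan_reduced_sym : symmetric fan_reduced.
Proof.
have [[c_sym _ _] _ _] := cS; move=> x y; rewrite /fan_reduced r_sym g_sym.
have -> : (x == v) && (y == u) || (x == u) && (y == v) =
          (y == v) && (x == u) || (y == u) && (x == v).
  by case: (x == v); case: (y == u); case: (x == u); case: (y == v).
by case: (boolP (g y x)) => //= gyx; rewrite (c_sym y x gyx).
Qed.

Lemma fan_reduced_matching x y z : r x y -> r x z ->
  ~~ fan_reduced x y -> ~~ fan_reduced x z -> y = z.
Proof.
have /andP[rvu lSu] := u_holds; have [[_ _ c_proper] c_miss _] := cS.
have l_not_at_u t : g u t -> c u t != l.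
  by move=> gut; have := forallP (c_miss u rvu l lSu) t; rewrite gut.
have nuv : u != v by apply: contraTneq rvu => ->; rewrite r_irr.
have g_not_at_v t : ~~ g v t by rewrite /del_vertex eqxx andbF.
move=> rxy rxz; rewrite /fan_reduced rxy rxz /= negb_and !negbK negb_and !negbK.
case/orP=> [/andP[gxy /eqP cxy]|exy]; case/orP=> [/andP[gxz /eqP cxz]|exz].
- apply/eqP; apply: contraTT (eqxx (l : nat)) => nyz.
  by have := c_proper x y z gxy gxz nyz; rewrite cxy cxz.
- case/orP: exz => /andP[/eqP ex _]; first by rewrite ex (negPf (g_not_at_v y)) in gxy.
  by have := l_not_at_u y; rewrite -ex cxy eqxx => /(_ gxy).
- case/orP: exy => /andP[/eqP ex _]; first by rewrite ex (negPf (g_not_at_v z)) in gxz.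
  by have := l_not_at_u z; rewrite -ex cxz eqxx => /(_ gxz).
move: exy exz => /orP[]/andP[/eqP-> /eqP->] /orP[]/andP[/eqP ex /eqP->] //;
  by rewrite ex eqxx in nuv.
Qed.

Lemma colourable_del_fan_reduced : colourable (del_vertex v fan_reduced) k.
Proof.
have [c_proper _ _] := cS; eexists.
apply: proper_colouring_subrel (drop_colour_proper (ltn_ord l) c_proper).
move=> x y /and3P[/and3P[rxy not_l _] nxv nyv] /=.
have gxy : g x y by rewrite /del_vertex rxy nxv nyv.
by move: not_l; rewrite gxy.
Qed.

Lemma deg_fan_reduced_nbr w : r v w -> w != u -> deg fan_reduced w + #|S w| <= k.+1.
Proof.
move=> rvw nwu; have [c_proper c_miss cardS] := cS.
have := deg_nbr_bound rvw; rewrite -cardS // => w_bound.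
have deg_w := deg_del_vertex r_sym r_irr rvw.
case: (boolP (missing g c w l)) => [l_miss|/forallPn[y]].
  have lS : l \notin S w by apply: contra nwu => /(holder_eq rvw) ->.
  have : deg g w + #|l |: S w| <= k.+1.
    rewrite -[X in _ <= X](deg_add_card_missing w c_proper) leq_add2l.
    by apply/subset_leq_card/subsetP => l'; rewrite !inE => /predU1P[->|/c_miss]; auto.
  have := subrel_deg w fan_reduced_sub; rewrite cardsU1 lS /=.
  (* [set] identifies the two elaborations of [#|S w|] for [lia]. *)
  by set m := #|S w|; lia.
rewrite negb_imply negbK => /andP[gwy /eqP cwy].
have : deg fan_reduced w < deg r w.
  apply: (subrel_deg_lt fan_reduced_sub (del_vertex_sub gwy)).
  by rewrite /fan_reduced gwy cwy eqxx /= andbF.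
lia.
Qed.

Lemma fan_reduce : colouring_extends T k -> colourable r k.+1.
Proof.
have /andP[rvu _] := u_holds; have [_ _ cardS] := cS.
have not_vu : ~~ fan_reduced v u by rewrite /fan_reduced !eqxx /= !andbF.
move=> IH; have [d d_proper] : colourable fan_reduced k.
  apply: (IH _ v s fan_reduced_sym _ _ _ _ colourable_del_fan_reduced).
  - by move=> x; rewrite /fan_reduced r_irr.
  - by rewrite -ltnS; apply: leq_trans deg_v; exact: subrel_deg_lt fan_reduced_sub rvu not_vu.
  - move=> w fvw nws; have rvw := fan_reduced_sub fvw.
    have nwu : w != u by apply: contraNneq not_vu => <-.
    by have := deg_fan_reduced_nbr rvw nwu; rewrite cardS // (negPf nws); lia.
  - move=> fvs; have nsu : s != u by apply: contraNneq not_vu => <-.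
    by have := deg_fan_reduced_nbr r_vs nsu; rewrite cardS // eqxx; lia.
eexists; exact: add_matching_proper fan_reduced_sym fan_reduced_matching d_proper.
Qed.

End Reduce.

End Fan.

Section Vizing.
Variable T : finType.

Lemma colouring_extends_isolated k (r : rel T) v : symmetric r -> (forall u, ~~ r v u) ->
  colourable (del_vertex v r) k -> colourable r k.
Proof. by move=> rs isol; apply: colourable_subrel; exact: isolated_del_vertex. Qed.

Theorem extend_colouring_del_vertex k : colouring_extends T k.
Proof.
elim: k => [|k IHk] r v s rs ri deg_v deg_nbr deg_s.
  apply: colouring_extends_isolated => // u; apply/negP => rvu.
  by move: deg_v; rewrite leqn0 => /eqP/cards0_eq/setP/(_ u); rewrite !inE rvu.
case: (boolP [exists u, r v u]) => [/existsP[u0 rvu0]|/existsPn isol]; last first.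
  exact: colouring_extends_isolated.
pose s' := if r v s then s else u0.
have rvs' : r v s' by rewrite /s'; case: ifP.
have deg_nbr' u : r v u -> u != s' -> deg r u < k.+1.
  rewrite /s'; case: ifP => [_|nrvs rvu _]; first exact: deg_nbr.
  by apply: (deg_nbr _ rvu); apply: contraFneq nrvs => <-.
have deg_s' : deg r s' <= k.+1.
  rewrite /s'; case: ifP => [/deg_s //|nrvs]; apply/ltnW/deg_nbr => //.
  by apply: contraFneq nrvs => <-.
case=> c c_proper; have [S cS] := fan_config_exists rs ri deg_v deg_nbr' deg_s' rvs' c_proper.
have [c' [S' [l [cS' holder1]]]] := fan_unique_holder rs deg_v deg_s' rvs' cS.
have /eqP/cards1P[u unique_holder] := holder1.
exact: (fan_reduce rs ri deg_v deg_nbr' deg_s' rvs' cS' unique_holder IHk).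
Qed.

Theorem vizing m (r : rel T) : symmetric r -> irreflexive r -> (forall x, deg r x <= m) ->
  colourable r m.+1.
Proof.
pose active (r : rel T) := [set x | [exists y, r x y]].
move=> rs ri deg_m; have [n] := ubnP #|active r|; elim: n => // n IHn in r rs ri deg_m *.
move=> lt_n; case: (boolP [exists x, [exists y, r x y]]) => [/existsP[v /existsP[y rvy]]|].
  apply: (extend_colouring_del_vertex (s := v) rs ri (leqW (deg_m v))) => [u _ _||].
  - by rewrite ltnS.
  - by rewrite ri.
  apply: IHn; [exact: del_vertex_sym | exact: del_vertex_irr | |].
    by move=> x; apply: leq_trans _ (deg_m x); apply/subrel_deg/del_vertex_sub.
  rewrite ltnS in lt_n; apply: leq_trans _ lt_n; rewrite (cardsD1 v (active r)) inE.
  have -> /= : [exists y, r v y] by apply/existsP; exists y.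
  rewrite add1n ltnS.
  apply/subset_leq_card/subsetP => x; rewrite !inE => /existsP[z /and3P[rxz nxv _]].
  by rewrite nxv; apply/existsP; exists z.
move=> /existsPn no_edge; exists (fun _ _ => 0).
by split=> x y; have /existsPn/(_ y)/negPf -> := no_edge x.
Qed.

End Vizing.

Section RainbowPaths.
Variable T : finType.
Implicit Types (e : rel T) (c : T -> T -> nat).

Lemma mem_pairmap_path e c x p l : path e x p -> l \in pairmap c x p ->
  exists a b, [/\ a \in x :: p, b \in x :: p, e a b & l = c a b].
Proof.
elim: p x => [|y p IHp] x //= /andP[exy pp]; rewrite inE => /predU1P[->|].
  by exists x, y; rewrite !inE !eqxx orbT.
case/(IHp y pp) => a [b [ap bp eab ->]].
by exists a, b; rewrite [a \in _]inE [b \in _]inE ap bp !orbT.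
Qed.

Lemma eq_pairmap_path e c c' x p : (forall a b, e a b -> c a b = c' a b) ->
  path e x p -> pairmap c x p = pairmap c' x p.
Proof.
move=> ecc'; elim: p x => [|y p IHp] x //= /andP[exy pp].
by rewrite ecc' // IHp.
Qed.

Lemma pairmap_rev c x p :
  pairmap c (last x p) (rev (belast x p)) = rev (pairmap (fun a b => c b a) x p).
Proof.
elim/last_ind: p => [|p y IHp] //=.
rewrite last_rcons belast_rcons -cats1 pairmap_cat rev_cat (lastI x p) rev_rcons /=.
by rewrite IHp.
Qed.

Lemma rainbow_path_sub e e' c x y p : subrel e e' ->
  rainbow_path e c x y p -> rainbow_path e' c x y p.
Proof. by move=> sub [ep ?]; split=> //; apply: sub_path ep. Qed.

Lemma rainbow_path_rev e c x y p : symmetric e ->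
  (forall a b, e a b -> c a b = c b a) ->
  rainbow_path e c x y p -> rainbow_path e c y x (rev (belast x p)).
Proof.
move=> e_sym c_sym [ep <- xp_uniq cp_uniq]; split.
- by rewrite rev_path; apply: sub_path ep => a b; rewrite e_sym.
- by case: p {ep xp_uniq cp_uniq} => //= z p; rewrite rev_cons last_rcons.
- by rewrite -rev_rcons -lastI rev_uniq.
- by rewrite pairmap_rev rev_uniq -(eq_pairmap_path c_sym ep).
Qed.

Lemma size_rainbow_path e k c x y p : proper_edge_colouring e k c ->
  rainbow_path e c x y p -> size p <= k.
Proof.
case=> _ cb _ [ep _ _ cp_uniq]; rewrite -(size_pairmap c x) -(size_iota 0 k).
apply: uniq_leq_size cp_uniq _ => l /(mem_pairmap_path ep)[a [b [_ _ eab ->]]].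
by rewrite mem_iota cb.
Qed.

End RainbowPaths.

Section TreeColouring.
Variables (T : finType) (e : rel T) (root : T) (d : T -> nat) (par : T -> T).
Hypotheses (e_sym : symmetric e) (e_irr : irreflexive e).
Hypothesis d_eq0 : forall u, (d u == 0) = (u == root).
Hypothesis par_edge : forall u, 0 < d u -> e u (par u).
Hypothesis d_par : forall u, 0 < d u -> d (par u) < d u.
Variables (chi : nat) (c : T -> T -> nat).
Hypothesis c_proper : proper_edge_colouring e chi c.

Definition far := [set u | 1 < d u].

Definition fresh u := chi + index u (enum far).

Definition far_parent_edge x y := (y == par x) && (1 < d x).

Definition tree_colour x y :=
  if far_parent_edge x y then fresh x else if far_parent_edge y x then fresh y else c x y.

Definition tree_edge x y := (y == par x) && (0 < d x) || (x == par y) && (0 < d y).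

Lemma par_near u : d u = 1 -> par u = root.
Proof. by move=> du1; apply/eqP; rewrite -d_eq0 -leqn0 -ltnS -du1 d_par ?du1. Qed.

Lemma fresh_lt u : u \in far -> fresh u < chi + #|far|.
Proof. by move=> uF; rewrite ltn_add2l cardE index_mem mem_enum. Qed.

Lemma fresh_inj : {in far &, injective fresh}.
Proof.
move=> u w uF wF /addnI uw.
by rewrite -(nth_index u (_ : u \in enum far)) ?mem_enum // uw nth_index ?mem_enum.
Qed.

Lemma far_parent_edge_far x y : far_parent_edge x y -> x \in far.
Proof. by case/andP=> _; rewrite inE. Qed.

Lemma far_parent_edge_asym x y : far_parent_edge x y -> ~~ far_parent_edge y x.
Proof.
case/andP=> /eqP-> dx; apply/negP => /andP[/eqP xE dpx].
by have := d_par (ltnW dpx); rewrite -xE; have := d_par (ltnW dx); lia.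
Qed.

Lemma tree_colour_proper : proper_edge_colouring e (chi + #|far|) tree_colour.
Proof.
have [cs cb cp] := c_proper; split.
- move=> x y exy; rewrite /tree_colour.
  case: (boolP (far_parent_edge x y)) => [/far_parent_edge_asym/negPf->|_] //.
  by case: ifP => // _; exact: cs.
- move=> x y exy; rewrite /tree_colour.
  case: ifP => [/far_parent_edge_far/fresh_lt //|_].
  case: ifP => [/far_parent_edge_far/fresh_lt //|_].
  exact: ltn_addr (cb _ _ exy).
move=> x y z exy exz nyz; rewrite /tree_colour.
have x_ne t : e x t -> x != t by move=> ext; apply: contraTneq ext => <-; rewrite e_irr.
have fresh_ne t u : t \in far -> u \in far -> t != u -> fresh t != fresh u.
  by move=> tF uF; apply: contraNneq => /fresh_inj ->.
have fresh_c t w : e x w -> fresh t != c x w.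
  by move=> exw; rewrite neq_ltn /fresh (ltn_addr _ (cb _ _ exw)) orbT.
have [fxy|_] := boolP (far_parent_edge x y); have [fxz|_] := boolP (far_parent_edge x z).
- by move: fxy fxz nyz => /andP[/eqP-> _] /andP[/eqP-> _]; rewrite eqxx.
- case: ifP => [fzx|_]; last exact: fresh_c.
  by apply: fresh_ne; rewrite ?(far_parent_edge_far fxy) ?(far_parent_edge_far fzx) ?x_ne.
- case: ifP => [fyx|_]; last by rewrite eq_sym fresh_c.
  by apply: fresh_ne; rewrite ?(far_parent_edge_far fyx) ?(far_parent_edge_far fxz) // eq_sym x_ne.
case: ifP => [fyx|_]; case: ifP => [fzx|_].
- by apply: fresh_ne; rewrite ?(far_parent_edge_far fyx) ?(far_parent_edge_far fzx).
- exact: fresh_c.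
- by rewrite eq_sym fresh_c.
- exact: cp.
Qed.

Lemma tree_colour_par_far u : 1 < d u -> tree_colour u (par u) = fresh u.
Proof. by move=> du; rewrite /tree_colour /far_parent_edge eqxx du. Qed.

Lemma tree_colour_par_near u : d u = 1 -> tree_colour u (par u) = c u root.
Proof.
move=> du; have /eqP droot : d root == 0 by rewrite d_eq0.
by rewrite /tree_colour /far_parent_edge (par_near du) du droot /= !andbF.
Qed.

(* Fresh colours are distinct and at least [chi]; the remaining parent edges
   all end at [root], where [c] is proper. *)
Lemma tree_colour_par_inj a x : 0 < d a -> 0 < d x -> a != x ->
  tree_colour a (par a) != tree_colour x (par x).
Proof.
have [cs cb cp] := c_proper.
have root_edge u : d u = 1 -> e root u by move=> du; rewrite e_sym -(par_near du) par_edge ?du.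
have fresh_near t u : d u = 1 -> fresh t != c u root.
  by move=> /root_edge eru; rewrite neq_ltn /fresh (ltn_addr _ (cb _ _ _)) ?orbT // e_sym.
move=> da dx nax; have [a_far|a_near] := ltnP 1 (d a); have [x_far|x_near] := ltnP 1 (d x).
- rewrite !tree_colour_par_far //; apply: contra nax => /eqP/fresh_inj-> //; by rewrite inE.
- have dx1 : d x = 1 by lia.
  by rewrite (tree_colour_par_far a_far) (tree_colour_par_near dx1) fresh_near.
- have da1 : d a = 1 by lia.
  by rewrite (tree_colour_par_far x_far) (tree_colour_par_near da1) eq_sym fresh_near.
have [da1 dx1] : d a = 1 /\ d x = 1 by lia.
rewrite !tree_colour_par_near // -cs ?root_edge // -[c x root]cs ?root_edge //.
exact: cp (root_edge _ da1) (root_edge _ dx1) nax.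
Qed.

Lemma tree_edge_sub : subrel tree_edge e.
Proof. by move=> x y /orP[]/andP[/eqP-> /par_edge]; rewrite // e_sym. Qed.

Lemma tree_edge_sym : symmetric tree_edge.
Proof. by move=> x y; rewrite /tree_edge orbC. Qed.

Lemma tree_edge_colour a b : tree_edge a b ->
  exists2 t, 0 < d t & [/\ t \in [:: a; b] & tree_colour a b = tree_colour t (par t)].
Proof.
have [cs _ _] := tree_colour_proper.
case/orP=> /andP[/eqP tE dt]; first by exists a; rewrite ?tE ?inE ?eqxx.
exists b => //; split; first by rewrite !inE eqxx orbT.
by rewrite tE cs // e_sym par_edge.
Qed.

Lemma rainbow_path_parent x y p : 0 < d x ->
  rainbow_path tree_edge tree_colour (par x) y p ->
  exists q, rainbow_path tree_edge tree_colour x y q.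
Proof.
move=> dx [pp <- p_uniq cp_uniq]; set z := par x in pp p_uniq cp_uniq *.
have nxz : x != z by apply: contraTneq (par_edge dx); rewrite -/z => <-; rewrite e_irr.
case: (boolP (x \in z :: p)) => [|x_notin].
  rewrite inE (negPf nxz) /= => xp; move: pp p_uniq cp_uniq.
  case/splitPr: xp => p1 p2 pp p_uniq cp_uniq.
  exists p2; split.
  - by move: pp; rewrite cat_path => /and3P[].
  - by rewrite last_cat.
  - by move: p_uniq; rewrite -cat_cons cat_uniq => /and3P[].
  - by move: cp_uniq; rewrite pairmap_cat cat_uniq /= => /and3P[_ _ /andP[]].
exists (z :: p); split=> //=; first by rewrite pp /tree_edge eqxx dx.
  by rewrite x_notin.
rewrite cp_uniq andbT; apply/negP => /(mem_pairmap_path pp)[a [b [ap bp /tree_edge_colour]]].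
case=> t dt [tab -> /eqP]; apply/negP; rewrite eq_sym tree_colour_par_inj //.
by apply: contraNneq x_notin => <-; move: tab; rewrite mem_seq2 => /orP[]/eqP->.
Qed.

Lemma tree_rainbow_path x y : exists p, rainbow_path tree_edge tree_colour x y p.
Proof.
have [n] := ubnP (d x + d y); elim: n => // n IHn in x y *.
wlog le_yx : x y / d y <= d x.
  move=> wlog_le lt_n; case: (leqP (d y) (d x)) => [le_yx|/ltnW le_xy]; first exact: wlog_le.
  have [|p rp] := wlog_le y x le_xy; first by rewrite addnC.
  have [cs _ _] := tree_colour_proper.
  exists (rev (belast y p)); apply: rainbow_path_rev tree_edge_sym _ rp.
  by move=> a b /tree_edge_sub; exact: cs.
move=> lt_n; case: (eqVneq x y) => [<-|nxy]; first by exists [::].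
have dx : 0 < d x.
  rewrite lt0n d_eq0; apply: contraNneq nxy => xr.
  have : d y <= 0 by apply: leq_trans le_yx _; rewrite leqn0 d_eq0 xr.
  by rewrite leqn0 d_eq0 xr eq_sym.
have [|p rp] := IHn (par x) y.
  by rewrite ltnS in lt_n; apply: leq_trans _ lt_n; rewrite ltn_add2r d_par.
exact: rainbow_path_parent dx rp.
Qed.

End TreeColouring.

Section Distance.
Variables (T : finType) (e : rel T).

Fixpoint walkb n x y : bool :=
  if n is n'.+1 then [exists z, e x z && walkb n' z y] else x == y.

Lemma walk_lenP x y n : walk_len e x y n <-> walkb n x y.
Proof.
split=> [[p [ep <- <-]]|].
  elim: p x ep => [|z p IHp] x /=; first by rewrite eqxx.
  by case/andP=> exz ep; apply/existsP; exists z; rewrite exz IHp.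
elim: n x => [|n IHn] x /=; first by move/eqP->; exists [::].
case/existsP=> z /andP[exz /IHn[p [ep <- <-]]].
by exists (z :: p); rewrite /= exz ep.
Qed.

Hypothesis e_conn : forall x y : T, connect e x y.

Lemma walkb_exists x y : exists n, walkb n x y.
Proof.
by have /connectP[p ep ->] := e_conn x y; exists (size p); apply/walk_lenP; exists p.
Qed.

Definition dist x y := ex_minn (walkb_exists x y).

Lemma dist_walkb x y : walkb (dist x y) x y.
Proof. by rewrite /dist; case: ex_minnP. Qed.

Lemma dist_min x y n : walkb n x y -> dist x y <= n.
Proof. by rewrite /dist; case: ex_minnP => m _ min_m /min_m. Qed.

Lemma is_dist_dist x y : is_dist e x y (dist x y).
Proof. by split=> [|n /walk_lenP]; [apply/walk_lenP; exact: dist_walkb | exact: dist_min]. Qed.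

Lemma is_dist_unique x y n : is_dist e x y n -> n = dist x y.
Proof.
have [walk_d min_d] := is_dist_dist x y.
by case=> walk_n min_n; apply/eqP; rewrite eqn_leq min_n ?min_d.
Qed.

Lemma dist_eq0 x y : (dist x y == 0) = (x == y).
Proof.
apply/idP/idP => [/eqP d0|/eqP->]; first by have := dist_walkb x y; rewrite d0.
by rewrite -leqn0 dist_min //= eqxx.
Qed.

Lemma dist_le1 x y : (dist x y <= 1) = (x == y) || e x y.
Proof.
apply/idP/idP => [|/orP[/eqP->|exy]].
- rewrite leq_eqVlt ltnS leqn0 dist_eq0 orbC => /orP[->//|/eqP d1].
  by have := dist_walkb x y; rewrite d1 => /existsP[z /andP[exz /eqP<-]]; rewrite exz orbT.
- by rewrite ltnW // ltnS leqn0 dist_eq0.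
by apply: dist_min => /=; apply/existsP; exists y; rewrite exy eqxx.
Qed.

Definition closer_nbr y x :=
  if [pick z | e x z && (dist z y < dist x y)] is Some z then z else x.

Lemma closer_nbrP x y : 0 < dist x y ->
  e x (closer_nbr y x) /\ dist (closer_nbr y x) y < dist x y.
Proof.
rewrite /closer_nbr; case: pickP => [z /andP[exz lt_z] //|none].
have := dist_walkb x y; case dE: (dist x y) => [|n] //= /existsP[z /andP[exz walk_z]] _.
by have := none z; rewrite exz dE ltnS dist_min.
Qed.

End Distance.

Section Bounds.
Variables (T : finType) (e : rel T).
Hypotheses (e_sym : symmetric e) (e_irr : irreflexive e).

Lemma deg_le_maxdeg x : deg e x <= maxdeg e.
Proof. exact: (leq_bigmax (F := fun v => #|[set u | e v u]|)). Qed.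

Lemma maxdeg_attained : 0 < #|T| -> exists v, maxdeg e = deg e v.
Proof.
by move=> T_gt0; have [v vE] := eq_bigmax (fun v => #|[set u | e v u]|) T_gt0; exists v.
Qed.

Lemma maxdeg_le_colours k c : proper_edge_colouring e k c -> maxdeg e <= k.
Proof. by move=> c_proper; apply/bigmax_leqP => v _; exact: deg_le_colours c_proper. Qed.

Lemma deg_le_card_sub1 v : deg e v <= #|T| - 1.
Proof.
rewrite /deg subn1 -(cardsC1 v); apply/subset_leq_card/subsetP => u; rewrite !inE.
by apply: contraTneq => ->; rewrite e_irr.
Qed.

Lemma diam_le_rainbow D k c : is_diam e D -> properly_rainbow_connected e k c -> D <= k.
Proof.
case=> [[x [y [walk_D min_D]]] _] [c_proper c_rainbow].
case: (eqVneq x y) => [xy|nxy].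
  have : D <= 0 by apply: min_D; apply/walk_lenP; rewrite /= xy.
  by rewrite leqn0 => /eqP->.
have [p rp] := c_rainbow x y nxy; have [ep lp _ _] := rp.
by apply: leq_trans (size_rainbow_path c_proper rp); apply: min_D; exists p.
Qed.

Hypothesis e_conn : forall x y : T, connect e x y.

Lemma diam_exists : 0 < #|T| -> exists D, is_diam e D.
Proof.
move=> T_gt0; have : 0 < #|{: T * T}| by rewrite card_prod muln_gt0 T_gt0.
case/(eq_bigmax (fun p : T * T => dist e_conn p.1 p.2)) => [[x y] maxE].
exists (dist e_conn x y); split; first by exists x, y; exact: is_dist_dist.
move=> n [x' [y' /is_dist_unique ->]]; rewrite -maxE.
exact: (leq_bigmax (F := fun p : T * T => dist e_conn p.1 p.2) (x', y')).
Qed.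

Lemma card_far_dist v : #|far (dist e_conn ^~ v)| = #|T| - 1 - deg e v.
Proof.
have farC : ~: far (dist e_conn ^~ v) = v |: [set u | e v u].
  by apply/setP => u; rewrite !inE -leqNgt dist_le1 e_sym.
have := cardsC (far (dist e_conn ^~ v)); rewrite farC cardsU1 inE e_irr /deg; lia.
Qed.

Lemma rainbow_colouring_exists chi c : 0 < #|T| -> proper_edge_colouring e chi c ->
  exists c', properly_rainbow_connected e (chi + (#|T| - 1 - maxdeg e)) c'.
Proof.
move=> T_gt0 c_proper; have [v ->] := maxdeg_attained T_gt0.
pose d := dist e_conn ^~ v; pose par := closer_nbr e_conn v.
have d_eq0 u : (d u == 0) = (u == v) := dist_eq0 e_conn u v.
have par_edge u : 0 < d u -> e u (par u) by case/closer_nbrP.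
have d_par u : 0 < d u -> d (par u) < d u by case/closer_nbrP.
exists (tree_colour d par chi c); rewrite -card_far_dist; split.
  exact: (tree_colour_proper e_irr d_par c_proper).
move=> x y _; have [p rp] := tree_rainbow_path e_sym e_irr d_eq0 par_edge d_par c_proper x y.
by exists p; apply: rainbow_path_sub rp; exact: tree_edge_sub.
Qed.

End Bounds.

Theorem theorem2p2 (T : finType) (e : rel T)
  (e_sym : symmetric e) (e_irr : irreflexive e)
  (e_conn : forall x y : T, connect e x y) (nontriv : 1 < #|T|) :
  exists k chi D : nat,
    is_prc e k /\ is_chromatic_index e chi /\ is_diam e D /\
    maxn (maxdeg e) D <= k /\
    k <= chi + (#|T| - 1 - maxdeg e) /\
    (chi = maxdeg e -> chi + (#|T| - 1 - maxdeg e) = #|T| - 1) /\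
    (chi <> maxdeg e -> chi + (#|T| - 1 - maxdeg e) = #|T|).
Proof.
have T_gt0 : 0 < #|T| by apply: ltnW.
have vizing_e := vizing e_sym e_irr (@deg_le_maxdeg _ e).
have [chi chi_index] := is_min_exists (P := colourable e) (ex_intro _ _ vizing_e).
have [[c c_proper] chi_min] := chi_index.
have rainbow_e := rainbow_colouring_exists e_sym e_irr e_conn T_gt0 c_proper.
have [k k_prc] := is_min_exists (P := fun k => exists c, properly_rainbow_connected e k c)
  (ex_intro _ _ rainbow_e).
have [[c' c'_rainbow] k_min] := k_prc.
have [D diam] := diam_exists e_conn T_gt0.
exists k, chi, D; do 3!split=> //.
have chi_lb := maxdeg_le_colours c_proper; have chi_ub := chi_min _ vizing_e.
have [v maxdegE] := maxdeg_attained e T_gt0.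
have := deg_le_card_sub1 e_irr v; rewrite -maxdegE.
have [c'_proper _] := c'_rainbow.
split; first by rewrite geq_max (diam_le_rainbow diam c'_rainbow) (maxdeg_le_colours c'_proper).
by split; [exact: k_min rainbow_e | lia].
Qed.
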